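(* Let $T\in\mathcal L(\mathcal P_n)$, $T\ne 0$, and suppose there is a constant $C>0$ such that for each nonconstant $f\in\mathcal P_n$ there exist $u\in Z(f)$ and $v\in Z(Tf)$ with $|u-v|\le C$. Then $T\phi_0$ is a nonzero constant polynomial $c$, and the matrix of $T$ with respect to the basis $\{\phi_0,\dots,\phi_n\}$ is upper triangular with all diagonal entries equal to $c$; i.e. for each $m=0,\dots,n$, $T\phi_m\in\operatorname{span}\{\phi_0,\dots,\phi_m\}$ and the coefficient of $\phi_m$ in $T\phi_m$ equals $c$.
   Context: Let $n\ge 1$ be an integer and $\mathcal P_n$ the complex vector space of polynomials in one complex variable of degree at most $n$; $\mathcal L(\mathcal P_n)$ is the set of linear operators $\mathcal P_n\to\mathcal P_n$; $\phi_k(z)=z^k/k!$ for $k=0,\dots,n$. For a nonzero $f$, $Z(f)$ is the multiset of roots of $f$ (with multiplicity; empty for nonzero constants); $Z(0)=\mathbb C$. *)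

From HB Require Import structures.
From mathcomp Require Import all_boot all_order all_algebra.
From mathcomp Require Import reals complex.
Set Implicit Arguments. Unset Strict Implicit. Unset Printing Implicit Defensive.
Import Order.TTheory GRing.Theory Num.Theory.
Local Open Scope ring_scope.

Definition phi (F : fieldType) (k : nat) : {poly F} := (k`!%:R)^-1 *: 'X^k.

Definition inPn (F : fieldType) (n : nat) (p : {poly F}) : bool := (size p <= n.+1)%N.

From HB Require Import structures.
From mathcomp Require Import all_boot all_order all_algebra.
From mathcomp Require Import reals complex.
From mathcomp Require Import ring zify.
Set Implicit Arguments. Unset Strict Implicit. Unset Printing Implicit Defensive.
Import Order.TTheory GRing.Theory Num.Theory.
Local Open Scope ring_scope.

(* Write P_k for T phi_k, let e be the least shift such that
   deg P_k <= k + e - n for every k <= n, and let d_k be the coefficient of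
   degree k + e - n of P_k. The only root of f = ('X - w)^m is w, while
   (T f)(w + s) is, uniformly in |s| <= C, a polynomial in w of degree
   m + e - n whose leading coefficient is the m-th iterated difference of k! d_k.
   As T f has a root within C of w for every w, these differences vanish for
   1 <= m <= n, so k! d_k = d_0 for all k <= n. Minimality of e makes some d_k,
   hence every d_k, nonzero; comparing degrees at k = 0 and k = n then gives
   e = n, which is the claim with c = d_0. *)

Section ShiftEstimates.
Variables (F : numFieldType) (C : F).
Hypothesis C_ge0 : 0 <= C.

Let C1_ge1 : 1 <= 1 + C. Proof. by rewrite lerDl. Qed.

Let normrD_shift_le (w s : F) :
  `|s| <= C -> 1 <= `|w| -> `|w + s| <= (1 + C) * `|w|.
Proof.
move=> sC w1; apply: le_trans (ler_normD _ _) _.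
rewrite mulrDl mul1r lerD2l (le_trans sC) //.
by rewrite -{1}(mulr1 C) ler_wpM2l.
Qed.

Lemma normr_expDr_sub (w s : F) j : 1 <= `|w| -> `|s| <= C ->
  `|(w + s) ^+ j - w ^+ j| * `|w| <= ((1 + C) ^+ j - 1) * `|w| ^+ j.
Proof.
move=> w1 sC; elim: j => [|j IH]; first by rewrite !expr0 !subrr normr0 !mul0r.
have -> : (w + s) ^+ j.+1 - w ^+ j.+1 =
    (w + s) * ((w + s) ^+ j - w ^+ j) + s * w ^+ j.
  by rewrite !exprS; ring.
set y := `|(w + s) ^+ j - w ^+ j|.
have K_ge0 : 0 <= (1 + C) ^+ j - 1 by rewrite subr_ge0 exprn_ege1.
apply: (le_trans (y := (`|w + s| * y + C * `|w| ^+ j) * `|w|)).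
  rewrite ler_wpM2r //; apply: le_trans (ler_normD _ _) _.
  by rewrite !normrM normrX lerD2l ler_wpM2r ?exprn_ge0.
rewrite mulrDl -mulrA.
apply: (le_trans (y := (1 + C) * `|w| * (((1 + C) ^+ j - 1) * `|w| ^+ j)
                       + C * `|w| ^+ j * `|w|)).
  by rewrite lerD2r; apply: ler_pM; rewrite ?mulr_ge0 ?normr_ge0 ?normrD_shift_le.
by rewrite le_eqVlt !exprS; apply/orP; left; apply/eqP; ring.
Qed.

Lemma normr_shifted_horner_sub (P : {poly F}) (w s : F) a j M :
  1 <= `|w| -> `|s| <= C -> (size P <= j.+1)%N -> (a + j)%N = M ->
  `|w ^+ a * P.[w + s] * w - P`_j * w ^+ M.+1|
    <= (\sum_(i < j.+1) `|P`_i| * (1 + C) ^+ i) * `|w| ^+ M.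
Proof.
move=> w1 sC sP aM.
rewrite (horner_coef_wide _ sP) big_ord_recr /=.
have -> : w ^+ a * (\sum_(i < j) P`_i * (w + s) ^+ i + P`_j * (w + s) ^+ j) * w
            - P`_j * w ^+ M.+1 =
    \sum_(i < j) P`_i * (w ^+ a * (w + s) ^+ i * w)
    + P`_j * (w ^+ a * ((w + s) ^+ j - w ^+ j) * w).
  rewrite mulrDr mulrDl -addrA; congr (_ + _).
    by rewrite big_distrr big_distrl; apply: eq_bigr => i _ /=; ring.
  by rewrite -aM exprS exprD; ring.
rewrite big_ord_recr /= mulrDl; apply: le_trans (ler_normD _ _) _.
apply: lerD.
  apply: le_trans (ler_norm_sum _ _ _) _.
  rewrite mulr_suml; apply: ler_sum => i _.
  rewrite normrM -[X in _ <= X]mulrA; apply: ler_wpM2l => //.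
  rewrite !normrM !normrX.
  apply: (le_trans (y := `|w| ^+ a * ((1 + C) ^+ i * `|w| ^+ i) * `|w|)).
    rewrite ler_wpM2r // ler_wpM2l ?exprn_ge0 // -exprMn.
    by rewrite lerXn2r ?nnegrE ?normrD_shift_le ?mulr_ge0 ?(le_trans _ C1_ge1).
  have -> : `|w| ^+ a * ((1 + C) ^+ i * `|w| ^+ i) * `|w| =
            (1 + C) ^+ i * `|w| ^+ (a + i).+1 by rewrite exprS exprD; ring.
  rewrite ler_wpM2l ?exprn_ge0 ?(le_trans _ C1_ge1) // ler_weXn2l //.
  by have := ltn_ord i; rewrite -aM; lia.
rewrite normrM -[X in _ <= X]mulrA; apply: ler_wpM2l => //.
rewrite !normrM !normrX -mulrA.
have -> : (1 + C) ^+ j * `|w| ^+ M = `|w| ^+ a * ((1 + C) ^+ j * `|w| ^+ j).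
  by rewrite -aM exprD; ring.
rewrite ler_wpM2l ?exprn_ge0 //; apply: le_trans (@normr_expDr_sub w s j w1 sC) _.
by rewrite ler_wpM2r ?exprn_ge0 // lerBlDr lerDl.
Qed.

End ShiftEstimates.

Lemma neq0_of_dominant_term (F : numFieldType) (A K x w : F) M : 0 <= K ->
  K < `|A| * `|w| -> `|x * w - A * w ^+ M.+1| <= K * `|w| ^+ M -> x != 0.
Proof.
move=> K_ge0 KAw; apply: contraTneq => ->.
have w_gt0 : 0 < `|w|.
  by rewrite normr_gt0; apply: contraTneq KAw => ->; rewrite normr0 mulr0 le_gtF.
rewrite mul0r sub0r normrN normrM normrX exprS mulrA ler_pM2r ?exprn_gt0 //.
by rewrite lt_geF.
Qed.

(* Uniformly in [|s| <= C], the sum is a polynomial in [w] of degree [M] whose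
   leading coefficient is the (nonzero) sum in the hypothesis. *)
Lemma shifted_sum_neq0 (F : numFieldType) (C : F) (Q : nat -> {poly F})
    (g : nat -> F) m M : 0 <= C ->
  (forall k, (k <= m)%N -> (size (Q k) <= (M + k).+1 - m)%N) ->
  \sum_(k < m.+1) g k * (Q k)`_(M + k - m) != 0 ->
  exists w, forall s, `|s| <= C ->
    \sum_(k < m.+1) g k * (w ^+ (m - k) * (Q k).[w + s]) != 0.
Proof.
move=> C_ge0 sQ; set A := \sum_(k < m.+1) _ => A_neq0.
pose Kk k := \sum_(i < (M + k - m).+1) `|(Q k)`_i| * (1 + C) ^+ i.
pose K := \sum_(k < m.+1) `|g k| * Kk k.
have Kk_ge0 k : 0 <= Kk k.
  by apply: sumr_ge0 => i _; rewrite mulr_ge0 ?exprn_ge0 ?addr_ge0.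
have K_ge0 : 0 <= K by apply: sumr_ge0 => k _; rewrite mulr_ge0.
have A_gt0 : 0 < `|A| by rewrite normr_gt0.
pose w := 1 + K / `|A|.
have normw : `|w| = w by rewrite ger0_norm // addr_ge0 // divr_ge0 // ltW.
have w_ge1 : 1 <= `|w| by rewrite normw lerDl divr_ge0 // ltW.
exists w => s sC; apply: (@neq0_of_dominant_term _ A K _ w M K_ge0).
  by rewrite normw mulrDr mulr1 mulrC divfK ?gt_eqF // ltrDr.
rewrite /A !mulr_suml -sumrB; apply: le_trans (ler_norm_sum _ _ _) _.
apply: ler_sum => k _; rewrite -2!(mulrA (g k)) -mulrBr normrM -[X in _ <= X]mulrA.
apply: ler_wpM2l => //.
have [->|Qk_neq0] := eqVneq (Q k) 0.
  by rewrite horner0 coef0 !(mul0r, mulr0) subrr normr0 mulr_ge0 ?exprn_ge0.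
have sQk := sQ k (leq_ord k); have lt_km := ltn_ord k.
rewrite -size_poly_gt0 in Qk_neq0.
by apply: normr_shifted_horner_sub => //; lia.
Qed.

Lemma scale_fact_phi (F : numFieldType) k : k`!%:R *: phi F k = 'X^k.
Proof. by rewrite /phi scalerA mulfV ?scale1r // pnatr_eq0 -lt0n fact_gt0. Qed.

Lemma phi_expansion (F : numFieldType) (p : {poly F}) N : (size p <= N.+1)%N ->
  p = \sum_(k < N.+1) (p`_k * k`!%:R) *: phi F k.
Proof.
move=> sp; under eq_bigr do rewrite -scalerA scale_fact_phi.
rewrite -poly_def; apply/polyP => j; rewrite coef_poly.
by case: ltnP => // hj; rewrite nth_default // (leq_trans sp).
Qed.

Lemma size_sum_phi (F : fieldType) j (a : nat -> F) :
  (size (\sum_(k < j) a k *: phi F k)%R <= j)%N.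
Proof.
elim: j => [|j IH]; first by rewrite big_ord0 size_poly0.
rewrite big_ord_recr /=; apply: leq_trans (size_polyD _ _) _.
rewrite geq_max (leq_trans IH) //; apply: leq_trans (size_scale_leq _ _) _.
by apply: leq_trans (size_scale_leq _ _) _; rewrite size_polyXn.
Qed.

Lemma exp_XsubC_phi (F : numFieldType) (w : F) m :
  ('X - w%:P) ^+ m =
    \sum_(i < m.+1) ((-w) ^+ (m - i) * 'C(m, i)%:R * i`!%:R) *: phi F i.
Proof.
rewrite addrC exprDn; apply: eq_bigr => i _.
rewrite -scalerA scale_fact_phi -mul_polyC -mulrnAl; congr (_ * _).
by rewrite -(rmorphN polyC) -rmorphXn -rmorphMn /= mulr_natr.
Qed.

(* The sums are the iterated forward differences of [b] at [0]. *)
Lemma iterated_differences_eq0_const (F : comNzRingType) (b : nat -> F) n :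
  (forall m, (1 <= m <= n)%N ->
     \sum_(k < m.+1) ((-1) ^+ (m - k) * 'C(m, k)%:R) * b k = 0) ->
  forall k, (k <= n)%N -> b k = b 0%N.
Proof.
move=> Db k; elim/ltn_ind: k => [[//|m] IH lt_mn].
have := Db m.+1; rewrite lt_mn => /(_ isT).
rewrite big_ord_recr /= subnn expr0 mul1r binn mul1r.
rewrite (eq_bigr (fun i : 'I_m.+1 => (-1) ^+ (m.+1 - i) * 'C(m.+1, i)%:R * b 0%N));
  last by move=> i _; rewrite IH // (leq_trans _ lt_mn) // ltnW.
rewrite -big_distrl /=.
have : \sum_(i < m.+2) (-1 : F) ^+ (m.+1 - i) * 'C(m.+1, i)%:R = 0.
  have := exprDn (-1 : F) 1 m.+1; rewrite addNr expr0n /= => /esym E.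
  rewrite -[RHS]E.
  by apply: eq_bigr => i _; rewrite expr1n mulr1 mulr_natr.
rewrite big_ord_recr /= subnn expr0 binn mul1r => /eqP; rewrite addr_eq0 => /eqP ->.
by rewrite mulN1r addrC => /eqP; rewrite subr_eq0 => /eqP.
Qed.

Lemma size_poly_leq_coef0 (R : nzSemiRingType) (p : {poly R}) j :
  (size p <= j.+1)%N -> p`_j = 0 -> (size p <= j)%N.
Proof.
move=> /leq_sizeP sp pj; apply/leq_sizeP => i.
by rewrite leq_eqVlt => /predU1P [<- // | /sp].
Qed.

Section OperatorsOnPn.
Variables (F : numFieldType) (n : nat) (T : {poly F} -> {poly F}).
Hypothesis T_Pn : forall p, inPn n p -> inPn n (T p).
Hypothesis T_linear : forall (a : F) p q, inPn n p -> inPn n q ->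
  T (a *: p + q) = a *: T p + T q.
Hypothesis T_neq0 : exists p, inPn n p /\ T p != 0.

Local Notation P k := (T (phi F k)).

Lemma phi_Pn k : (k <= n)%N -> inPn n (phi F k).
Proof.
by move=> kn; rewrite /inPn (leq_trans (size_scale_leq _ _)) // size_polyXn.
Qed.

Lemma T_sum_phi j (a : nat -> F) : (j <= n.+1)%N ->
  T (\sum_(k < j) a k *: phi F k) = \sum_(k < j) a k *: P k.
Proof.
have T0 : T 0 = 0.
  have Pn0 : inPn n (0 : {poly F}) by rewrite /inPn size_poly0.
  have := @T_linear 1 0 0 Pn0 Pn0; rewrite !scale1r addr0 => E.
  by apply: (addrI (T 0)); rewrite addr0 -E.
elim: j => [|j IH] jn; first by rewrite !big_ord0.
rewrite !big_ord_recr /= addrC T_linear ?IH 1?addrC ?phi_Pn ?(ltnW jn) //.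
by rewrite /inPn (leq_trans (size_sum_phi _ _)) // ltnW.
Qed.

Lemma T_phi_expansion p : inPn n p ->
  T p = \sum_(k < n.+1) (p`_k * k`!%:R) *: P k.
Proof.
by move=> pn; rewrite {1}(phi_expansion pn) (T_sum_phi (fun k => p`_k * k`!%:R)).
Qed.

Lemma exists_T_phi_neq0 : exists2 k, (k <= n)%N & P k != 0.
Proof.
have [p [pn Tp_neq0]] := T_neq0.
case: (boolP [exists k : 'I_n.+1, P k != 0]) => [/existsP [k Pk] | /existsPn Pk0].
  by exists k; rewrite ?leq_ord.
move: Tp_neq0; rewrite T_phi_expansion // big1 ?eqxx // => k _.
by move: (Pk0 k); rewrite negbK => /eqP ->; rewrite scaler0.
Qed.

(* deg P_k <= k + e - n for all k <= n, with truncated subtraction: this reads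
   P_k = 0 when k + e < n. *)
Definition shift_bounds_degrees e :=
  [forall k : 'I_n.+1, size (P k) <= (k + e).+1 - n]%N.

Lemma exists_shift_bounding_degrees : exists e, shift_bounds_degrees e.
Proof.
exists (2 * n)%N; apply/forallP => k.
have := T_Pn (phi_Pn (leq_ord k)); rewrite /inPn; move: (size _) => s; lia.
Qed.

Definition degree_shift := ex_minn exists_shift_bounding_degrees.

Definition top_coef k := (P k)`_(k + degree_shift - n).

Lemma size_T_phi_shift k : (k <= n)%N ->
  (size (P k) <= (k + degree_shift).+1 - n)%N.
Proof.
rewrite /degree_shift; case: ex_minnP => e /forallP bound_e _ kn.
exact: (bound_e (Ordinal (kn : k < n.+1)%N)).
Qed.

Lemma degree_shift_minimal e : shift_bounds_degrees e -> (degree_shift <= e)%N.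
Proof. by rewrite /degree_shift; case: ex_minnP => e' _; apply. Qed.

Lemma exists_top_coef_neq0 : exists2 k, (k <= n)%N & top_coef k != 0.
Proof.
case: (boolP [exists k : 'I_n.+1, top_coef k != 0]) =>
  [/existsP [k ck] | /existsPn c0].
  by exists k; rewrite ?leq_ord.
have size_lt k : (k <= n)%N -> (size (P k) <= k + degree_shift - n)%N.
  move=> kn; have := c0 (Ordinal (kn : k < n.+1)%N); rewrite negbK /= => /eqP top_k.
  apply: size_poly_leq_coef0 top_k; have := size_T_phi_shift kn; lia.
have [k kn] := exists_T_phi_neq0; rewrite -size_poly_gt0 => Pk_gt0.
have shift_gt0 : (0 < degree_shift)%N by have := size_lt k kn; lia.
exfalso; suff /degree_shift_minimal : shift_bounds_degrees degree_shift.-1 by lia.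
apply/forallP => i; have := size_lt i (leq_ord i); lia.
Qed.

Variable C : F.
Hypothesis C_ge0 : 0 <= C.
Hypothesis T_roots_near : forall f, inPn n f -> (1 < size f)%N ->
  exists u v, root f u /\ root (T f) v /\ `|u - v| <= C.

(* Otherwise [T] maps [('X - w%:P) ^+ m], whose only root is [w], to a
   polynomial without roots near [w] once [w] is large. *)
Lemma iterated_differences_top_coef_eq0 m : (1 <= m <= n)%N ->
  \sum_(k < m.+1) ((-1) ^+ (m - k) * 'C(m, k)%:R) * (k`!%:R * top_coef k) = 0.
Proof.
case/andP => m_gt0 mn.
pose g k : F := (-1) ^+ (m - k) * 'C(m, k)%:R * k`!%:R.
pose M := (m + degree_shift - n)%N.
have size_P k : (k <= m)%N -> (size (P k) <= (M + k).+1 - m)%N.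
  by move=> km; have := size_T_phi_shift (leq_trans km mn); lia.
rewrite (_ : \sum_(k < m.+1) _ = \sum_(k < m.+1) g k * (P k)`_(M + k - m)).
  2: apply: eq_bigr => k _; rewrite /g /top_coef !mulrA; congr (_ * (P k)`_ _).
  2: by have := ltn_ord k; lia.
apply/eqP; apply: contraT => top_neq0.
have [w w_far] := shifted_sum_neq0 C_ge0 size_P top_neq0.
pose f := ('X - w%:P) ^+ m.
have fPn : inPn n f by rewrite /inPn size_exp_XsubC.
have f_nconst : (1 < size f)%N by rewrite size_exp_XsubC ltnS.
have [u [v [fu [Tfv uv]]]] := T_roots_near fPn f_nconst.
have u_w : u = w.
  by move: fu; rewrite /root horner_exp hornerXsubC expf_eq0 subr_eq0 => /andP[_ /eqP].
subst u; exfalso; have := w_far (v - w); rewrite distrC => /(_ uv) /negP; apply.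
move: Tfv; rewrite /f exp_XsubC_phi.
rewrite (T_sum_phi (fun i => (-w) ^+ (m - i) * 'C(m, i)%:R * i`!%:R)) //.
rewrite addrC subrK /root horner_sum.
move=> /eqP sum0; apply/eqP; rewrite -[RHS]sum0; apply: eq_bigr => k _.
by rewrite hornerZ /g (exprNn w); ring.
Qed.

Lemma fact_top_coef_const k : (k <= n)%N -> k`!%:R * top_coef k = top_coef 0.
Proof.
move=> kn; have := iterated_differences_eq0_const (b := fun k => k`!%:R * top_coef k)
  iterated_differences_top_coef_eq0 kn.
by rewrite mul1r.
Qed.

Lemma top_coef_neq0 k : (k <= n)%N -> top_coef k != 0.
Proof.
have fact_neq0 i : (i`!%:R : F) != 0 by rewrite pnatr_eq0 -lt0n fact_gt0.
have top0_neq0 : top_coef 0 != 0.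
  have [i i_n] := exists_top_coef_neq0; apply: contraNneq => top0.
  by have /eqP := fact_top_coef_const i_n; rewrite top0 mulf_eq0 (negPf (fact_neq0 i)).
move=> kn; apply: contraNneq top0_neq0 => topk.
by rewrite -(fact_top_coef_const kn) topk mulr0.
Qed.

Lemma degree_shift_eq : degree_shift = n.
Proof.
have lt_size k : (k <= n)%N -> (k + degree_shift - n < size (P k))%N.
  move=> kn; rewrite ltnNge; apply: contra (top_coef_neq0 kn) => /leq_sizeP P_k.
  by rewrite /top_coef P_k.
have := lt_size 0%N (leq0n n); have := size_T_phi_shift (leq0n n).
have := lt_size n (leqnn n); have := T_Pn (phi_Pn (leqnn n)); rewrite /inPn.
move: (size (T (phi F n))) (size (T (phi F 0))) => s1 s2; lia.
Qed.

Lemma size_T_phi m : (m <= n)%N -> (size (P m) <= m.+1)%N.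
Proof.
by move=> mn; have := size_T_phi_shift mn; rewrite degree_shift_eq -addSn addnK.
Qed.

Lemma coef_T_phi m : (m <= n)%N -> (P m)`_m * m`!%:R = top_coef 0.
Proof.
by move=> mn; rewrite -(fact_top_coef_const mn) /top_coef degree_shift_eq addnK mulrC.
Qed.

End OperatorsOnPn.

Theorem mainTheorem9 (R : realType) (n : nat) (T : {poly R[i]} -> {poly R[i]})
  (Cst : R) :
  (1 <= n)%N ->
  (forall p, inPn n p -> inPn n (T p)) ->
  (forall (a : R[i]) p q, inPn n p -> inPn n q -> T (a *: p + q) = a *: T p + T q) ->
  (exists p, inPn n p /\ T p != 0) ->
  0 < Cst ->
  (forall f, inPn n f -> (1 < size f)%N ->
     exists u v, root f u /\ root (T f) v /\ `|u - v| <= (Cst%:C)%C) ->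
  exists c : R[i], c != 0 /\ T (phi _ 0) = c%:P /\
    forall m : nat, (m <= n)%N ->
      exists a : nat -> R[i],
        T (phi _ m) = \sum_(k < m.+1) a k *: phi _ k /\ a m = c.
Proof.
move=> _ T_Pn T_linear T_neq0 Cst_gt0 T_roots_near.
have C_ge0 : 0 <= (Cst%:C)%C :> R[i] by rewrite lecR ltW.
have coef_T := coef_T_phi T_Pn T_linear T_neq0 C_ge0 T_roots_near.
have size_T := size_T_phi T_Pn T_linear T_neq0 C_ge0 T_roots_near.
have top_neq0 := top_coef_neq0 T_Pn T_linear T_neq0 C_ge0 T_roots_near.
exists (top_coef T_Pn 0); split; first exact: top_neq0 (leq0n n).
split=> [|m mn].
  by rewrite (size1_polyC (size_T 0%N (leq0n n))) -(coef_T 0%N) // mulr1.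
exists (fun k => (T (phi _ m))`_k * k`!%:R); split; last exact: coef_T.
exact: phi_expansion (size_T m mn).
Qed.
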